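(* Let $\mathcal{E}=\{e_1,\dots,e_n\}$ be an orthonormal basis for $\mathbb{R}^n$. If $M$ is a $k$-dimensional $\mathcal{E}$-PR subspace and there exists $x\in M$ with $|\mathrm{supp}(x)|=k$, then $M$ is a maximal $\mathcal{E}$-PR subspace.
   Context: For $x=\sum_{i=1}^n\alpha_ie_i$, $\mathrm{supp}(x)=\{i:\alpha_i\neq0\}$. A subspace $M$ is an $\mathcal{E}$-PR subspace if $\{P_Me_i\}_{i=1}^n$ (with $P_M$ the orthogonal projection onto $M$) spans $M$ and whenever $x,y\in M$ satisfy $|\langle x,P_Me_i\rangle|=|\langle y,P_Me_i\rangle|$ for all $i$, then $x=\pm y$. It is maximal if it is not a proper subspace of another $\mathcal{E}$-PR subspace. *)

(* R^n as row vectors 'rV[R]_n over R : realType,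
   subspaces as row spaces of square matrices (mxalgebra). *)
From HB Require Import structures.
From mathcomp Require Import all_boot all_order all_algebra.
From mathcomp Require Import reals.
Set Implicit Arguments. Unset Strict Implicit. Unset Printing Implicit Defensive.
Import Order.TTheory GRing.Theory Num.Theory.
Local Open Scope ring_scope.

Definition dotv (R : realType) (n : nat) (u v : 'rV[R]_n) : R := (u *m v^T) 0 0.

Definition orthonormal_basis (R : realType) (n : nat) (e : 'I_n -> 'rV[R]_n) :=
  forall i j : 'I_n, dotv (e i) (e j) = (i == j)%:R.

(* Orthogonal projection onto the row space of M: with B = row_base M
   (rows form a basis of M), P = B^T (B B^T)^{-1} B, acting on row vectors. *)
Definition projmx (R : realType) (n : nat) (M : 'M[R]_n) :
    'M[R]_(n, n) :=
  let B := row_base M in (B^T *m invmx (B *m B^T)) *m B.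

Definition proj (R : realType) (n : nat) (M : 'M[R]_n) (v : 'rV[R]_n) : 'rV[R]_n :=
  v *m projmx M.

Definition ePR (R : realType) (n : nat) (e : 'I_n -> 'rV[R]_n) (M : 'M[R]_n) : Prop :=
  ((\matrix_(i < n) proj M (e i)) == M)%MS /\
  forall x y : 'rV[R]_n, (x <= M)%MS -> (y <= M)%MS ->
    (forall i : 'I_n, `|dotv x (proj M (e i))| = `|dotv y (proj M (e i))|) ->
    x = y \/ x = - y.

Definition maximal_ePR (R : realType) (n : nat) (e : 'I_n -> 'rV[R]_n)
    (M : 'M[R]_n) : Prop :=
  ePR e M /\ ~ (exists N : 'M[R]_n, ePR e N /\ (M < N)%MS).

From HB Require Import structures.
From mathcomp Require Import all_boot all_order all_algebra.
From mathcomp Require Import reals.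
Import Order.TTheory GRing.Theory Num.Theory.
Set Implicit Arguments.
Unset Strict Implicit.
Unset Printing Implicit Defensive.
Local Open Scope ring_scope.

(* Suppose M < N with N an E-PR subspace, and x in M has exactly k = rank M
   nonzero coordinates.  Since rank N > k, some nonzero v in N is orthogonal
   to the e_i on the support of x, so x and v have disjoint supports and
   x + v, x - v have coordinates of equal moduli.  For u in N the projection
   P_N is invisible in <u, P_N e_i> = <u, e_i>, so the E-PR property of N
   forces x + v = +-(x - v), i.e. v = 0 or x = 0: a contradiction. *)

Lemma normrDB_mul_eq0 (R : numDomainType) (a b : R) :
  a * b = 0 -> `|a + b| = `|a - b|.
Proof.
move/eqP; rewrite mulf_eq0 => /orP[]/eqP->.
  by rewrite add0r sub0r normrN.
by rewrite addr0 subr0.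
Qed.

Lemma addr_eq_subr_pm (F : numFieldType) (V : lmodType F) (x v : V) :
  x + v = x - v \/ x + v = - (x - v) -> v = 0 \/ x = 0.
Proof.
have twice_eq0 (u : V) : u = - u -> u = 0.
  move/(congr1 (fun w => u + w)); rewrite subrr -mulr2n -scaler_nat => /eqP.
  by rewrite scaler_eq0 pnatr_eq0 => /eqP.
case=> [/addrI v_eq_oppv | xv_eq]; [left | right]; apply: twice_eq0 => //.
by move: xv_eq; rewrite opprB addrC => /addrI.
Qed.

Section InnerProduct.
Variables (R : realType) (n : nat).
Implicit Types (x y u : 'rV[R]_n) (N : 'M[R]_n).

Lemma dotv0l y : dotv 0 y = 0.
Proof. by rewrite /dotv mul0mx mxE. Qed.

Lemma dotvDl x y u : dotv (x + y) u = dotv x u + dotv y u.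
Proof. by rewrite /dotv mulmxDl mxE. Qed.

Lemma dotvBl x y u : dotv (x - y) u = dotv x u - dotv y u.
Proof. by rewrite /dotv mulmxBl !mxE. Qed.

Lemma dotv_self_eq0 x : dotv x x = 0 -> x = 0.
Proof.
rewrite /dotv mxE => sum_sq_eq0.
have {}sum_sq_eq0 : \sum_j x 0 j ^+ 2 = 0.
  by rewrite -[RHS]sum_sq_eq0; apply: eq_bigr => j _; rewrite mxE expr2.
apply/rowP => j; rewrite mxE.
have /(_ j isT)/eqP := psumr_eq0P (fun i _ => sqr_ge0 (x 0 i)) sum_sq_eq0.
by rewrite sqrf_eq0 => /eqP.
Qed.

Lemma gram_unitmx {m : nat} {B : 'M[R]_(m, n)} : row_free B -> B *m B^T \in unitmx.
Proof.
move=> freeB; rewrite -row_free_unit; apply: inj_row_free => w wBBt0.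
apply: (row_free_inj freeB); rewrite mul0mx; apply: dotv_self_eq0.
by rewrite /dotv trmx_mul mulmxA -(mulmxA w) wBBt0 mul0mx mxE.
Qed.

Lemma projmx_tr_id x N : (x <= N)%MS -> x *m (projmx N)^T = x.
Proof.
rewrite -(eq_row_base N) => /submxP[w ->].
rewrite /projmx; have := gram_unitmx (row_base_free N).
move: (row_base N) => B BBt_unit.
rewrite !trmx_mul trmxK trmx_inv trmx_mul trmxK !mulmxA.
by rewrite -(mulmxA w) -(mulmxA _ _ (invmx _)) (mulmxV BBt_unit) mulmx1.
Qed.

Lemma dotv_proj x u N : (x <= N)%MS -> dotv x (proj N u) = dotv x u.
Proof. by move=> xN; rewrite /dotv /proj trmx_mul mulmxA projmx_tr_id. Qed.

Lemma dotv_orthonormal_sum (e : 'I_n -> 'rV[R]_n) (a : 'I_n -> R) j :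
  orthonormal_basis e -> dotv (\sum_i a i *: e i) (e j) = a j.
Proof.
move=> on_e; rewrite /dotv mulmx_suml summxE (bigD1 j) //= big1 => [|i ij].
  by rewrite -scalemxAl mxE -/(dotv _ _) on_e eqxx mulr1 addr0.
by rewrite -scalemxAl mxE -/(dotv _ _) on_e (negbTE ij) mulr0.
Qed.

Lemma exists_orthogonal_in (I : finType) (S : {set I}) (f : I -> 'rV[R]_n) N :
  (#|S| < \rank N)%N ->
  exists v, [/\ (v <= N)%MS, v != 0 & {in S, forall i, dotv v (f i) = 0}].
Proof.
move=> ltSN; pose C := \matrix_(j < #|S|) f (enum_val j).
pose K := row_base N *m C^T.
have /rowV0Pn[w /sub_kermxP wK w_neq0] : kermx K != 0.
  rewrite kermx_eq0; apply: contraTN ltSN => /eqP rankK.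
  by rewrite -leqNgt -rankK rank_leq_col.
exists (w *m row_base N); split.
- by rewrite -(eq_row_base N) submxMl.
- apply: contra w_neq0 => /eqP wB0; apply/eqP.
  by apply: (row_free_inj (row_base_free N)); rewrite mul0mx.
- move=> i iS; have : (w *m row_base N *m C^T) 0 (enum_rank_in iS i) = 0.
    by rewrite -mulmxA wK mxE.
  rewrite /dotv mxE => wCr; rewrite -[RHS]wCr mxE; apply: eq_bigr => l _.
  by rewrite !mxE enum_rankK_in.
Qed.

End InnerProduct.

Theorem corollary4p2 (R : realType) (n k : nat) (e : 'I_n -> 'rV[R]_n)
    (M : 'M[R]_n) :
  orthonormal_basis e ->
  (0 < k)%N ->
  \rank M = k ->
  ePR e M ->
  (exists (x : 'rV[R]_n) (alpha : 'I_n -> R),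
      (x <= M)%MS /\ x = \sum_(i < n) alpha i *: e i /\
      #|[set i | alpha i != 0]| = k) ->
  maximal_ePR e M.
Proof.
move=> on_e k_gt0 rankM ePR_M [x [a [xM [xE supp_x]]]].
split=> //; case=> N [[_ phase_N] ltMN].
have xN := submx_trans xM (ltmxW ltMN).
have x_coord i : dotv x (e i) = a i by rewrite xE dotv_orthonormal_sum.
have supp_lt_rankN : (k < \rank N)%N by rewrite -rankM rank_ltmx.
rewrite -supp_x in k_gt0 supp_lt_rankN.
have [v [vN v_neq0 v_orth]] := exists_orthogonal_in e supp_lt_rankN.
have disjoint_supp i : dotv x (e i) * dotv v (e i) = 0.
  rewrite x_coord; have [->|ai] := eqVneq (a i) 0; first by rewrite mul0r.
  by rewrite v_orth ?mulr0 ?inE.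
have xvN : ((x + v)%R <= N)%MS by apply: addmx_sub.
have xv'N : ((x - v)%R <= N)%MS by apply: addmx_sub; rewrite ?eqmx_opp.
have [v0|x0] : v = 0 \/ x = 0.
  apply: addr_eq_subr_pm; apply: phase_N => // i.
  by rewrite !dotv_proj // dotvDl dotvBl normrDB_mul_eq0.
- by rewrite v0 eqxx in v_neq0.
- have /card_gt0P[i] := k_gt0.
  by rewrite inE -x_coord x0 dotv0l eqxx.
Qed.
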